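(* Let $P$ be a finite partial IP loop. Then $\#\Gamma(P)\equiv(\#P-1)(\#P-2)-o_3(P)\pmod 6$.
   Context: A partial IP loop is a set $P$ with a partial binary operation $(x,y)\mapsto xy$ defined on a subset $D(P)\subseteq P\times P$ (the domain) such that: (1) there is $1\in P$ with $(1,x),(x,1)\in D(P)$ and $1x=x1=x$ for all $x\in P$; (2) for each $x\in P$ there is a unique $y\in P$, denoted $x^{-1}$, with $(x,y),(y,x)\in D(P)$ and $xy=yx=1$; (3) whenever $(x,y)\in D(P)$, we have $(x^{-1},xy),(xy,y^{-1})\in D(P)$ and $x^{-1}(xy)=y$, $(xy)y^{-1}=x$. The set of gaps is $\Gamma(P)=(P\times P)\setminus D(P)$. $O_3(P)=\{x\in P: (x,x)\in D(P),\ (x,xx)\in D(P),\ x\neq 1,\ x(xx)=1\}$ and $o_3(P)=\#O_3(P)$; $\#A$ denotes the cardinality of a finite set $A$. *)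

From mathcomp Require Import all_boot all_order all_algebra.
Set Implicit Arguments. Unset Strict Implicit. Unset Printing Implicit Defensive.

(* A partial binary operation on a finite carrier P is represented by a
   boolean domain relation D (D x y  <=>  (x,y) \in D(P)) together with a
   total function mul : P -> P -> P whose values are only relevant on D. *)
Definition partial_IP_loop (P : finType) (D : rel P) (mul : P -> P -> P)
  (one : P) : Prop :=
  [/\
      (forall x, [/\ D one x, D x one, mul one x = x & mul x one = x]),
      (forall x, exists y, [/\ D x y, D y x, mul x y = one, mul y x = one &
          forall z, D x z -> D z x -> mul x z = one -> mul z x = one -> z = y])
    &
      (forall x y inv_x inv_y,
          D x inv_x -> D inv_x x -> mul x inv_x = one -> mul inv_x x = one ->
          D y inv_y -> D inv_y y -> mul y inv_y = one -> mul inv_y y = one ->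
          D x y ->
          [/\ D inv_x (mul x y), D (mul x y) inv_y,
              mul inv_x (mul x y) = y & mul (mul x y) inv_y = x])].

Definition gaps (P : finType) (D : rel P) : {set P * P} :=
  [set p : P * P | ~~ D p.1 p.2].

Definition O3 (P : finType) (D : rel P) (mul : P -> P -> P) (one : P) : {set P} :=
  [set x : P | [&& D x x, D x (mul x x), x != one & mul x (mul x x) == one]].

From mathcomp Require Import all_boot all_order all_algebra.
From mathcomp Require Import all_fingroup all_solvable zify.
Import GRing.Theory Num.Theory.
Local Open Scope ring_scope.

(* The domain D(P) carries two permutations built from the inverse property:
   rho (x, y) = (y, (xy)^-1) of order 3 and sigma (x, y) = (xy, y^-1) of
   order 2.  The fixed points of rho are the pairs (x, x) with x = 1 or
   x in O_3(P), and those of sigma are the pairs (x, 1); moreover inversion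
   is a fixed-point-free involution of O_3(P).  Counting modulo 3 and 2 gives
   #D = o_3 + 1 (mod 3), #D = #P (mod 2) and o_3 = 0 (mod 2), and
   #Gamma = #P^2 - #D then yields the congruence modulo 6. *)

Lemma card_fixed_mod_prime {T : finType} {p : nat} {f : T -> T} (S : {set T}) :
  prime p -> (forall x, iter p f x = x) -> (forall x, x \in S -> f x \in S) ->
  (#|S| = #|[set x in S | f x == x]| %[mod p])%N.
Proof.
move=> p_pr fK fS.
have f_inj : injective f.
  apply: (can_inj (g := iter p.-1 f)) => x.
  by rewrite -iterSr prednK ?prime_gt0 // fK.
pose g := perm f_inj.
have gE x : g x = f x by rewrite permE.
have g_p : (g ^+ p = 1)%g.
  by apply/permP => x; rewrite permX perm1 (eq_iter gE) fK.
have pgroup_g : (p.-group <[g]>)%g.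
  rewrite /pgroup -orderE; apply: pnat_dvd (pnat_id p_pr).
  by rewrite order_dvdn g_p.
have g_acts : ([acts <[g]>, on S | 'P])%g.
  rewrite cycle_subG !inE /=; apply/subsetP => x Sx.
  by rewrite inE /= /aperm gE fS.
rewrite (pgroup_fix_mod pgroup_g g_acts); congr (_ %% _)%N.
by apply: eq_card => x; rewrite afix_cycle !inE /= sub1set inE /aperm gE.
Qed.

Lemma congr_mod6_from_mod2_mod3 (g d n o : nat) : (g + d = n * n)%N ->
  (d = o + 1 %[mod 3])%N -> (d = n %[mod 2])%N -> (o = 0 %[mod 2])%N ->
  (g%:Z = (n%:Z - 1) * (n%:Z - 2) - o%:Z %[mod 6])%Z.
Proof. move=> *; lia. Qed.

Section PartialIPLoop.

Context {P : finType} {D : rel P} {mul : P -> P -> P} {one : P}.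
Hypothesis loopP : partial_IP_loop D mul one.

Definition is_inverse x y := [&& D x y, D y x, mul x y == one & mul y x == one].

Definition inv x := odflt one [pick y | is_inverse x y].

Lemma invP x : [/\ D x (inv x), D (inv x) x, mul x (inv x) = one & mul (inv x) x = one].
Proof.
case: loopP => _ inv_ex _; rewrite /inv; case: pickP => [y /and4P[? ? /eqP ? /eqP ?] //|].
case: (inv_ex x) => y [Dxy Dyx xy1 yx1 _] /(_ y).
by rewrite /is_inverse Dxy Dyx xy1 yx1 !eqxx.
Qed.

Lemma inv_unique x y :
  D x y -> D y x -> mul x y = one -> mul y x = one -> y = inv x.
Proof.
move=> Dxy Dyx xy1 yx1; have [Dxi Dix xi1 ix1] := invP x.
case: loopP => _ inv_ex _; case: (inv_ex x) => y0 [_ _ _ _ uniq_y0].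
by rewrite (uniq_y0 _ Dxy Dyx xy1 yx1) (uniq_y0 _ Dxi Dix xi1 ix1).
Qed.

Lemma inverse_property {x y} : D x y ->
  [/\ D (inv x) (mul x y), D (mul x y) (inv y),
      mul (inv x) (mul x y) = y & mul (mul x y) (inv y) = x].
Proof.
move=> Dxy; have [? ? ? ?] := invP x; have [? ? ? ?] := invP y.
by case: loopP => _ _ IP; apply: IP.
Qed.

Lemma oneP x : [/\ D one x, D x one, mul one x = x & mul x one = x].
Proof. by case: loopP => id1 _ _; apply: id1. Qed.

Lemma invK : involutive inv.
Proof. by move=> x; have [? ? ? ?] := invP x; apply/esym/inv_unique. Qed.

Lemma inv1 : inv one = one.
Proof. by have [? _ ? _] := oneP one; apply/esym/inv_unique. Qed.

Lemma mul_eq1_inv {x y} : D x y -> mul x y = one -> y = inv x.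
Proof.
move=> Dxy xy1; have [_ _ <- _] := inverse_property Dxy.
by rewrite xy1; have [_ _ _ ->] := oneP (inv x).
Qed.

Lemma mul_eq_left {x y} : D x y -> mul x y = x -> y = one.
Proof.
move=> Dxy xyx; have [_ _ <- _] := inverse_property Dxy.
by rewrite xyx; have [_ _ _ ->] := invP x.
Qed.

Lemma inv_eq1 x : (inv x == one) = (x == one).
Proof.
by apply/eqP/eqP => [x1|->]; rewrite ?inv1 // -(invK x) x1 inv1.
Qed.

Lemma mem_O3 x : (x \in O3 D mul one) = [&& D x x, x != one & mul x x == inv x].
Proof.
rewrite inE; apply/and4P/and3P => [[Dxx Dxxx x1 /eqP xxx1]|[Dxx x1 /eqP xx]].
  by split=> //; apply/eqP/mul_eq1_inv.
by have [Dxi _ xi1 _] := invP x; split; rewrite ?xx ?xi1.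
Qed.

Definition dom := [set p : P * P | D p.1 p.2].

Lemma card_gaps_dom : (#|gaps D| + #|dom| = #|P| * #|P|)%N.
Proof.
rewrite -card_prod -(cardsC dom) addnC; congr (_ + _)%N.
by apply: eq_card => -[x y]; rewrite !inE.
Qed.

Definition rho (p : P * P) := if D p.1 p.2 then (p.2, inv (mul p.1 p.2)) else p.

Definition sigma (p : P * P) := if D p.1 p.2 then (mul p.1 p.2, inv p.2) else p.

(* The inverse property applied to the pair (x^-1, xy), using x^-1 (xy) = y. *)
Lemma rotated_inverse_property {x y} : D x y -> D y (inv (mul x y)) /\ mul y (inv (mul x y)) = inv x.
Proof.
move=> Dxy; have [Dix _ ixy _] := inverse_property Dxy.
by have [_ D' _ e] := inverse_property Dix; rewrite ixy in D' e.
Qed.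

Lemma iter_rho p : iter 3 rho p = p.
Proof.
case: p => x y /=; case Dxy: (D x y); last by rewrite /rho /= !Dxy.
have [D1 e1] := rotated_inverse_property Dxy.
have [D2 e2] := rotated_inverse_property D1; rewrite e1 invK in D2 e2.
by rewrite /rho /= Dxy /= D1 /= e1 invK D2 /= e2 invK.
Qed.

Lemma iter_sigma p : iter 2 sigma p = p.
Proof.
case: p => x y /=; case Dxy: (D x y); last by rewrite /sigma /= !Dxy.
have [_ D1 _ e1] := inverse_property Dxy.
by rewrite /sigma /= Dxy /= D1 /= e1 invK.
Qed.

Lemma rho_dom p : p \in dom -> rho p \in dom.
Proof.
case: p => x y; rewrite !inE /rho /= => Dxy; rewrite Dxy /=.
by case: (rotated_inverse_property Dxy).
Qed.

Lemma sigma_dom p : p \in dom -> sigma p \in dom.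
Proof.
case: p => x y; rewrite !inE /sigma /= => Dxy; rewrite Dxy /=.
by case: (inverse_property Dxy).
Qed.

Lemma rho_fixed :
  [set p in dom | rho p == p] = [set (x, x) | x in one |: O3 D mul one].
Proof.
apply/setP => -[x y]; rewrite !inE /rho /=; apply/idP/imsetP.
  case/andP=> Dxy; rewrite Dxy => /eqP [yx xyx]; subst y.
  exists x => //; rewrite in_setU1 mem_O3 Dxy; case: eqP => //= _.
  by rewrite -[in X in _ == X]xyx invK.
case=> z; rewrite in_setU1 mem_O3 => Oz [-> ->].
case: eqP Oz => [->|_] /=.
  by have [D11 _ e11 _] := oneP one; rewrite D11 /= e11 inv1.
by case/andP=> Dzz /eqP zz; rewrite Dzz /= zz invK.
Qed.

Lemma sigma_fixed : [set p in dom | sigma p == p] = [set (x, one) | x : P].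
Proof.
apply/setP => -[x y]; rewrite !inE /sigma /=; apply/idP/imsetP.
  case/andP=> Dxy; rewrite Dxy => /eqP [xyx _].
  by exists x => //; rewrite (mul_eq_left Dxy xyx).
case=> z _ [-> ->].
by have [_ Dz1 _ z1] := oneP z; rewrite Dz1 /= z1 inv1.
Qed.

Lemma card_dom_mod3 : (#|dom| = #|O3 D mul one| + 1 %[mod 3])%N.
Proof.
rewrite (card_fixed_mod_prime dom _ iter_rho rho_dom) // rho_fixed.
rewrite card_imset; last by move=> a b [].
by rewrite cardsU1 mem_O3 eqxx andbF addnC.
Qed.

Lemma card_dom_mod2 : (#|dom| = #|P| %[mod 2])%N.
Proof.
rewrite (card_fixed_mod_prime dom _ iter_sigma sigma_dom) // sigma_fixed.
by rewrite card_imset // => a b [].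
Qed.

Lemma inv_O3 x : x \in O3 D mul one -> inv x \in O3 D mul one.
Proof.
rewrite !mem_O3 => /and3P[Dxx x1 /eqP xx].
have [_ D1 _ e1] := inverse_property Dxx; rewrite xx in D1 e1.
by rewrite D1 inv_eq1 x1 /= e1 invK.
Qed.

Lemma O3_inv_neq x : x \in O3 D mul one -> inv x != x.
Proof.
rewrite mem_O3 => /and3P[Dxx x1 /eqP xx]; apply: contraNneq x1 => ix.
by apply/eqP/(mul_eq_left Dxx); rewrite xx.
Qed.

Lemma card_O3_even : (#|O3 D mul one| = 0 %[mod 2])%N.
Proof.
rewrite (card_fixed_mod_prime (p := 2) _ _ invK inv_O3) //.
congr (_ %% 2)%N; apply/eqP; rewrite cards_eq0; apply/eqP/setP => x.
rewrite in_set0 in_set; apply/negbTE/nandP.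
by case: (boolP (x \in _)) => [/O3_inv_neq|]; [right | left].
Qed.

End PartialIPLoop.

Theorem lemma2 (P : finType) (D : rel P) (mul : P -> P -> P) (one : P) :
  partial_IP_loop D mul one ->
  (#|gaps D|%:Z = (#|P|%:Z - 1) * (#|P|%:Z - 2) - #|O3 D mul one|%:Z %[mod 6])%Z.
Proof.
move=> loopP; apply: congr_mod6_from_mod2_mod3.
- exact: card_gaps_dom.
- exact: card_dom_mod3 loopP.
- exact: card_dom_mod2 loopP.
- exact: card_O3_even loopP.
Qed.
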